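(* Let $m,n$ be positive integers and let $U=\begin{pmatrix} A & B\\ C & D\end{pmatrix}$ be an $(m+n)\times(m+n)$ unitary matrix decomposed with respect to $\mathbb C^m\oplus\mathbb C^n$. Let $\Psi(z)=A+zB(I-zD)^{-1}C$ and $\Psi'(w)=D^*+wB^*(I-wA^* )^{-1}C^*$. Then $$\{(z,w)\in\mathbb D^2:\det(\Psi(z)-wI)=0\}=\{(z,w)\in\mathbb D^2:\det(\Psi'(w)-zI)=0\}=\left\{(z,w)\in\mathbb D^2:\det\begin{pmatrix} A-wI & zB\\ C & zD-I\end{pmatrix}=0\right\},$$ and this set $V$, if non-empty, is a distinguished variety.
   Context: $\mathbb D$ is the open unit disk and $\mathbb D^2$ the open bidisk. A non-empty set $V\subseteq\mathbb C^2$ is a distinguished variety if there is a polynomial $p\in\mathbb C[z,w]$ with $V=\{(z,w)\in\mathbb D^2: p(z,w)=0\}$ and $\overline V\cap\partial(\mathbb D^2)=\overline V\cap(\partial\mathbb D)^2$, where $\partial\mathbb D$ is the unit circle. *)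

From HB Require Import structures.
From mathcomp Require Import all_boot all_order all_algebra.
From mathcomp Require Import sesquilinear spectral.
From mathcomp Require Import complex.
From mathcomp Require Import reals.
Set Implicit Arguments. Unset Strict Implicit. Unset Printing Implicit Defensive.
Import Order.TTheory GRing.Theory Num.Theory.
Local Open Scope ring_scope.

Section Defs.
Variable R : realType.
Local Notation C := (R[i]).

Definition in_disk (z : C) : Prop := `|z| < 1.
Definition in_bidisk (x : C * C) : Prop := in_disk x.1 /\ in_disk x.2.
Definition in_circle (z : C) : Prop := `|z| = 1.
Definition in_torus (x : C * C) : Prop := in_circle x.1 /\ in_circle x.2.

(* Euclidean topology of C^2, via the (equivalent) max-norm balls *)
Definition near2 (x y : C * C) (e : R) : Prop :=
  `|x.1 - y.1| < (real_complex R e) /\ `|x.2 - y.2| < (real_complex R e).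

Definition closure2 (S : C * C -> Prop) (x : C * C) : Prop :=
  forall e : R, 0 < e -> exists y, S y /\ near2 x y e.

Definition boundary2 (S : C * C -> Prop) (x : C * C) : Prop :=
  closure2 S x /\ closure2 (fun y => ~ S y) x.

(* evaluation of a polynomial p in C[z,w], represented as {poly {poly C}}
   with outer variable w and inner variable z *)
Definition peval2 (p : {poly {poly C}}) (z w : C) : C := (p.[w%:P]).[z].

Definition distinguished_variety (V : C * C -> Prop) : Prop :=
  (exists x, V x) /\
  exists p : {poly {poly C}},
    (forall x : C * C, V x <-> (in_bidisk x /\ peval2 p x.1 x.2 = 0)) /\
    (forall x : C * C, closure2 V x -> boundary2 in_bidisk x -> in_torus x).

End Defs.

From HB Require Import structures.
From mathcomp Require Import all_boot all_order all_algebra.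
From mathcomp Require Import sesquilinear spectral complex reals boolp.
From mathcomp Require Import lra.
Import Order.TTheory GRing.Theory Num.Theory.
Local Open Scope ring_scope.
Local Open Scope sesquilinear_scope.
Set Implicit Arguments. Unset Strict Implicit. Unset Printing Implicit Defensive.

(* Each of the three determinant conditions says that the unitary [U] maps
   some nonzero vector [(x, z y)] to [(w x, y)]; on the bidisk the matrices
   [1 - z D] and [1 - w A^*] are invertible, which lets one pass between the
   three forms.
   The pencil [[A - w, z B]; [C, z D - 1]] can be singular at boundary points
   off the torus only because of the largest subspace reducing [A] (resp. [D])
   on which [B] and [C^*] (resp. [C] and [B^*]) vanish.  Replacing the pencil by
   [-1] on these subspaces gives a factorization [M = M' E] with [det E] zero-free
   on the bidisk, so [det M'] defines the same variety there; by unitarity of [U]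
   it has no zeros with one coordinate in the disk and the other on the circle,
   and continuity of [det M'] forces the closure of the variety to meet the
   boundary of the bidisk only on the torus. *)

Lemma contraction_eq0 (R : numDomainType) (a t : R) :
  0 <= a -> 0 <= t < 1 -> a <= t * a -> a = 0.
Proof.
move=> a_ge0 /andP[t_ge0 t_lt1] le_a; have [//|a_neq0] := eqVneq a 0.
have a_gt0 : 0 < a by rewrite lt_def a_neq0.
have ta_lt_a : t * a < a by rewrite gtr_pMl.
by have := lt_le_trans ta_lt_a le_a; rewrite ltxx.
Qed.

Section SquaredNorm.
Variable F : numClosedFieldType.

Definition sqnorm k (v : 'rV[F]_k) : F := dotmx v v.

Lemma sqnorm_ge0 k (v : 'rV[F]_k) : 0 <= sqnorm v.
Proof. exact: (dnorm_ge0 (@dotmx F k)). Qed.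

Lemma sqnorm_eq0 k (v : 'rV[F]_k) : (sqnorm v == 0) = (v == 0).
Proof. exact: dnorm_eq0. Qed.

Lemma sqnorm0 k : sqnorm (0 : 'rV[F]_k) = 0.
Proof. by apply/eqP; rewrite sqnorm_eq0. Qed.

Lemma sqnormZ k (c : F) (v : 'rV[F]_k) : sqnorm (c *: v) = `|c| ^+ 2 * sqnorm v.
Proof. exact: (dnormZ (@dotmx F k)). Qed.

Lemma sqnorm_row_mx k l (x : 'rV[F]_k) (y : 'rV[F]_l) :
  sqnorm (row_mx x y) = sqnorm x + sqnorm y.
Proof. by rewrite /sqnorm !dotmxE tr_row_mx map_col_mx mul_row_col mxE. Qed.

Lemma sqnorm_unitary k (W : 'M[F]_k) (v : 'rV_k) :
  W \is unitarymx -> sqnorm (v *m W) = sqnorm v.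
Proof.
move/unitarymxP=> WWt.
by rewrite /sqnorm !dotmxE trmx_mul map_mxM mulmxA -(mulmxA v) WWt mulmx1.
Qed.

Lemma sqnorm_contraction_eq0 k (c : F) (v : 'rV[F]_k) :
  `|c| < 1 -> sqnorm v <= `|c| ^+ 2 * sqnorm v -> v = 0.
Proof.
move=> c_lt1 le_v; apply/eqP; rewrite -sqnorm_eq0; apply/eqP.
apply: contraction_eq0 le_v; first exact: sqnorm_ge0.
by rewrite exprn_ge0 ?expr_lt1.
Qed.

End SquaredNorm.

Section ReducingKernel.
Variable F : numClosedFieldType.
Variables (k j l : nat) (X : 'M[F]_k) (Y : 'M[F]_(j, k)) (Z : 'M[F]_(k, l)).

Definition reducing_ker r (S : 'M[F]_(r, k)) :=
  [&& (S *m X <= S)%MS, (S *m X^t* <= S)%MS, (S <= kermx (Y^t*))%MS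
    & (S <= kermx Z)%MS].

Lemma reducing_ker_adds r1 r2 (S : 'M_(r1, k)) (T : 'M_(r2, k)) :
  reducing_ker S -> reducing_ker T -> reducing_ker (S + T)%MS.
Proof.
case/and4P=> SX SXt SY SZ /and4P[TX TXt TY TZ]; apply/and4P; split.
- by rewrite addsmxMr addsmxS.
- by rewrite addsmxMr addsmxS.
- by rewrite addsmx_sub SY.
- by rewrite addsmx_sub SZ.
Qed.

Lemma reducing_ker0 : reducing_ker (0 : 'M_k).
Proof. by rewrite /reducing_ker !mul0mx !sub0mx. Qed.

Lemma max_reducing_ker : exists2 S : 'M_k, reducing_ker S &
  forall r (T : 'M_(r, k)), reducing_ker T -> (T <= S)%MS.
Proof.
pose P i := `[< exists S : 'M_k, reducing_ker S /\ \rank S = i >].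
have P0 : exists i, P i.
  by exists 0%N; apply/asboolP; exists 0; rewrite reducing_ker0 mxrank0.
have Pk i : P i -> (i <= k)%N by move/asboolP=> [S [_ <-]]; exact: rank_leq_col.
case: (ex_maxnP P0 Pk) => i /asboolP[S [redS <-]] maxS.
exists S => // r T redT.
have le_rank : (\rank (S + T)%MS <= \rank S)%N.
  by apply: maxS; apply/asboolP; exists (S + T)%MS; rewrite reducing_ker_adds.
have [_ eqST] := mxrank_leqif_sup (addsmxSl S T).
have : \rank S == \rank (S + T)%MS by rewrite eqn_leq le_rank mxrankS ?addsmxSl.
by rewrite eqST addsmx_sub => /andP[].
Qed.

End ReducingKernel.

Local Notation "S ^!" :=
  (orthomx Num.Def.conjC (mx_of_hermitian (hermitian1mx _)) S) : matrix_set_scope.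

Section ReducingProjection.
Variable F : numClosedFieldType.
Variables (k j l : nat) (X : 'M[F]_k) (Y : 'M[F]_(j, k)) (Z : 'M[F]_(k, l)).
Variable S : 'M[F]_k.
Hypothesis redS : reducing_ker X Y Z S.
Local Notation P := (proj_ortho S).

Lemma reducing_ker_orthoMr r (T : 'M_(r, k)) : (T <= S^!)%MS -> (T *m X <= S^!)%MS.
Proof.
case/and4P: redS => _ /submxP[Q SXt] _ _; rewrite !orthomx1E => /eqP TSt.
have : (S *m X^t*)^t* = (Q *m S)^t* by rewrite SXt.
rewrite !trmx_mul !map_mxM trmxCK => XSt.
by apply/eqP; rewrite -mulmxA XSt mulmxA TSt mul0mx.
Qed.

Lemma mulmx_proj_reducing_ker : Y *m P = 0.
Proof.
apply: proj_ortho_0; rewrite orthomx1E.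
case/and4P: redS => _ _ /sub_kermxP SYt _.
have : (S *m Y^t*)^t* = 0 by rewrite SYt trmx0 map_mx0.
by rewrite trmx_mul map_mxM trmxCK => ->.
Qed.

Lemma proj_reducing_kerC : P *m X = X *m P.
Proof.
case/and4P: redS => SX _ _ _.
suff PX_XP r (W : 'M_(r, k)) : W *m P *m X = W *m X *m P.
  by have := PX_XP _ 1%:M; rewrite !mul1mx.
rewrite -[in W *m X](subrK (W *m P) W) mulmxDl mulmxDl.
rewrite (proj_ortho_0 (reducing_ker_orthoMr (proj_ortho_compl_sub _ _))) add0r.
by rewrite [RHS]proj_ortho_id //; exact: submx_trans (submxMr X (proj_ortho_sub S W)) SX.
Qed.

End ReducingProjection.

Section IdempotentFactor.
Variables (R : comRingType) (k : nat) (X P : 'M[R]_k).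
Hypotheses (PP : P *m P = P) (PX : P *m X = X *m P).

(* Along [ker P (+) im P] the first factor is [X (+) -1] and the second
   is [1 (+) -X]. *)
Lemma idem_commute_factor :
  (X *m (1%:M - P) - P) *m (1%:M - P - X *m P) = X.
Proof.
have QQ : (1%:M - P) *m (1%:M - P) = 1%:M - P.
  by rewrite mulmxBl mul1mx mulmxBr mulmx1 PP subrr subr0.
have PQ : P *m (1%:M - P) = 0 by rewrite mulmxBr mulmx1 PP subrr.
have QP : (1%:M - P) *m P = 0 by rewrite mulmxBl mul1mx PP subrr.
have QX : (1%:M - P) *m X = X *m (1%:M - P).
  by rewrite mulmxBl mulmxBr mul1mx mulmx1 PX.
have factorQ : (X *m (1%:M - P) - P) *m (1%:M - P) = X *m (1%:M - P).
  by rewrite mulmxBl -mulmxA QQ PQ subr0.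
have factorXP : (X *m (1%:M - P) - P) *m (X *m P) = - (X *m P).
  rewrite mulmxBl -mulmxA (mulmxA (1%:M - P)) QX -mulmxA QP !mulmx0 sub0r.
  by rewrite mulmxA PX -mulmxA PP.
by rewrite mulmxBr factorQ factorXP opprK mulmxBr mulmx1 subrK.
Qed.

Lemma idem_commute_factor_ker r (v : 'M_(r, k)) :
  v *m (1%:M - P - X *m P) = 0 -> v *m P = v /\ v *m X = 0.
Proof.
move=> vE.
have EP : (1%:M - P - X *m P) *m P = - (X *m P).
  by rewrite !mulmxBl mul1mx PP -mulmxA PP subrr sub0r.
have vXP : v *m X *m P = 0.
  have : v *m ((1%:M - P - X *m P) *m P) = 0 by rewrite mulmxA vE mul0mx.
  by rewrite EP mulmxN mulmxA => /eqP; rewrite oppr_eq0 => /eqP.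
have vP : v *m P = v.
  by move/eqP: vE; rewrite !mulmxBr mulmx1 mulmxA vXP subr0 subr_eq0 => /eqP.
by split=> //; rewrite -vP -mulmxA PX mulmxA vXP.
Qed.

End IdempotentFactor.

Section PolyLipschitz.
Variable F : numDomainType.

Lemma poly_lipschitz_disk (c : {poly F}) : exists N L, [/\ 0 <= N, 0 <= L,
  (forall z, `|z| <= 1 -> `|c.[z]| <= N) &
  (forall z z0, `|z| <= 1 -> `|z0| <= 1 -> `|c.[z] - c.[z0]| <= L * `|z - z0|)].
Proof.
elim/poly_ind: c => [|p a [N [L [N0 L0 pN pL]]]].
  by exists 0, 0; split=> // *; rewrite ?horner0 ?subrr normr0 ?mul0r.
exists (N + `|a|), (L + N); split; rewrite ?addr_ge0 //.
  move=> z z_le1; rewrite hornerMXaddC (le_trans (ler_normD _ _)) // lerD2r.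
  by rewrite normrM (le_trans _ (pN z z_le1)) // ler_piMr.
move=> z z0 z_le1 z0_le1; rewrite !hornerMXaddC.
have -> : p.[z] * z + a - (p.[z0] * z0 + a) =
          (p.[z] - p.[z0]) * z + p.[z0] * (z - z0).
  by rewrite opprD addrACA subrr addr0 mulrBl mulrBr addrA subrK.
rewrite (le_trans (ler_normD _ _)) // (mulrDl L) !normrM lerD //.
  by rewrite (le_trans _ (pL _ _ z_le1 z0_le1)) // ler_piMr.
by rewrite ler_wpM2r ?pN.
Qed.

Lemma poly2_lipschitz_bidisk (q : {poly {poly F}}) : exists L, 0 <= L /\
  forall z w z0 w0, `|z| <= 1 -> `|w| <= 1 -> `|z0| <= 1 -> `|w0| <= 1 ->
  `|q.[w%:P].[z] - q.[w0%:P].[z0]| <= L * (`|z - z0| + `|w - w0|).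
Proof.
suff [N [L [N0 L0 qN qL]]] : exists N L, [/\ 0 <= N, 0 <= L,
    (forall z w, `|z| <= 1 -> `|w| <= 1 -> `|q.[w%:P].[z]| <= N) &
    (forall z w z0 w0, `|z| <= 1 -> `|w| <= 1 -> `|z0| <= 1 -> `|w0| <= 1 ->
      `|q.[w%:P].[z] - q.[w0%:P].[z0]| <= L * (`|z - z0| + `|w - w0|))].
  by exists L.
elim/poly_ind: q => [|q c [N [L [N0 L0 qN qL]]]].
  by exists 0, 0; split=> // *; rewrite !horner0 ?subrr normr0 ?mul0r.
have [Nc [Lc [Nc0 Lc0 cN cL]]] := poly_lipschitz_disk c.
have evalE z w : (q * 'X + c%:P).[w%:P].[z] = q.[w%:P].[z] * w + c.[z].
  by rewrite hornerMXaddC hornerD hornerM hornerC.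
exists (N + Nc), (L + N + Lc); split; rewrite ?addr_ge0 //.
  move=> z w z_le1 w_le1; rewrite evalE (le_trans (ler_normD _ _)) // lerD ?cN //.
  by rewrite normrM (le_trans _ (qN z w z_le1 w_le1)) // ler_piMr.
move=> z w z0 w0 z_le1 w_le1 z0_le1 w0_le1; rewrite !evalE.
set a := q.[w%:P].[z]; set a0 := q.[w0%:P].[z0]; set d := `|z - z0| + `|w - w0|.
have dz : `|z - z0| <= d by rewrite lerDl normr_ge0.
have dw : `|w - w0| <= d by rewrite lerDr normr_ge0.
have -> : a * w + c.[z] - (a0 * w0 + c.[z0]) =
          ((a - a0) * w + a0 * (w - w0)) + (c.[z] - c.[z0]).
  by rewrite opprD addrACA; congr (_ + _); rewrite mulrBl mulrBr addrA subrK.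
rewrite (le_trans (ler_normD _ _)) // !(mulrDl _ _ d) lerD //.
  rewrite (le_trans (ler_normD _ _)) // !normrM lerD //.
    by rewrite (le_trans _ (qL _ _ _ _ z_le1 w_le1 z0_le1 w0_le1)) // ler_piMr.
  by rewrite (le_trans (ler_wpM2r (normr_ge0 _) (qN _ _ z0_le1 w0_le1))) ?ler_wpM2l.
by rewrite (le_trans (cL _ _ z_le1 z0_le1)) ?ler_wpM2l.
Qed.

End PolyLipschitz.

Lemma le0_of_forall_le_mul (R : realFieldType) (a k : R) :
  0 <= k -> (forall e, 0 < e -> a <= k * e) -> a <= 0.
Proof.
move=> k_ge0 a_le; rewrite leNgt; apply/negP => a_gt0.
have k1_gt0 : 0 < k + 1 by lra.
have := a_le (a / (k + 1)) (divr_gt0 a_gt0 k1_gt0).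
have : a / (k + 1) * (k + 1) = a by rewrite mulfVK // gt_eqF.
nra.
Qed.

Section Bidisk.
Variable R : realType.
Local Notation C := R[i].
Local Notation normc := (@Normc.normc R).
Local Open Scope complex_scope.

Lemma norm_complexE (x : C) : `|x| = (normc x)%:C.
Proof. by []. Qed.

Lemma normc_subr_le (x y : C) : normc x <= normc (x - y) + normc y.
Proof. by rewrite -lecR rmorphD /= -!norm_complexE -{1}(subrK y x) ler_normD. Qed.

Lemma norm_lt1E (x : C) : (`|x| < 1) = (normc x < 1).
Proof. by rewrite norm_complexE -(rmorph1 (real_complex R)) ltcR. Qed.

Lemma norm_le1E (x : C) : (`|x| <= 1) = (normc x <= 1).
Proof. by rewrite norm_complexE -(rmorph1 (real_complex R)) lecR. Qed.

Lemma disk_closure_le1 (a : C) :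
  (forall e, 0 < e -> exists2 b, `|b| < 1 & `|a - b| < e%:C) -> `|a| <= 1.
Proof.
move=> near_a; rewrite norm_le1E leNgt; apply/negP => a_gt1.
have [|b] := near_a (normc a - 1); first by rewrite subr_gt0.
rewrite norm_lt1E norm_complexE ltcR => b_lt1 ab_lt.
by have := normc_subr_le a b; lra.
Qed.

Lemma disk_nbhs (a : C) : `|a| < 1 ->
  exists2 e, 0 < e & forall b, `|a - b| < e%:C -> `|b| < 1.
Proof.
rewrite norm_lt1E => a_lt1; exists (1 - normc a); first by rewrite subr_gt0.
move=> b; rewrite norm_lt1E norm_complexE ltcR => ab_lt.
by have := normc_subr_le b a; rewrite -[b - a]opprB normcN; lra.
Qed.

Lemma boundary_bidisk (x : C * C) : boundary2 (@in_bidisk R) x ->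
  [/\ `|x.1| <= 1, `|x.2| <= 1 & `|x.1| = 1 \/ `|x.2| = 1].
Proof.
case: x => a b [near_in near_out].
have [a_le1 b_le1] : `|a| <= 1 /\ `|b| <= 1.
  split; apply: disk_closure_le1 => e e_gt0.
    by have [[a' b'] [[a'_lt1 _] [aa' _]]] := near_in e e_gt0; exists a'.
  by have [[a' b'] [[_ b'_lt1] [_ bb']]] := near_in e e_gt0; exists b'.
split=> //; move: a_le1 b_le1; rewrite !le_eqVlt => /orP[/eqP|a_lt1]; first by left.
case/orP=> [/eqP|b_lt1]; first by right.
have [ea ea_gt0 near_a] := disk_nbhs a_lt1.
have [eb eb_gt0 near_b] := disk_nbhs b_lt1.
have e_gt0 : 0 < Num.min ea eb by rewrite lt_min ea_gt0.
have [[a' b'] [out [aa' bb']]] := near_out _ e_gt0.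
exfalso; apply: out; split; [apply: near_a | apply: near_b].
  by rewrite (lt_le_trans aa') // lecR ge_min lexx.
by rewrite (lt_le_trans bb') // lecR ge_min lexx orbT.
Qed.

Lemma closure2_poly_eq0 (S : C * C -> Prop) (q : {poly {poly C}}) (x : C * C) :
  (forall y, S y -> in_bidisk y /\ peval2 q y.1 y.2 = 0) ->
  closure2 S x -> `|x.1| <= 1 -> `|x.2| <= 1 -> peval2 q x.1 x.2 = 0.
Proof.
move=> Sq clx x1_le1 x2_le1; have [L [L_ge0 qL]] := poly2_lipschitz_bidisk q.
have LE : L = (normc L)%:C by rewrite -norm_complexE ger0_norm.
apply/Normc.eq0_normc/le_anti/andP; split; last first.
  by rewrite -lecR rmorph0 -norm_complexE normr_ge0.
apply: (@le0_of_forall_le_mul _ _ (normc L *+ 2)) => [|e e_gt0].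
  by rewrite mulrn_wge0 // -lecR rmorph0 -LE.
have [y [/Sq[[y1_lt1 y2_lt1] qy0] [xy1 xy2]]] := clx e e_gt0.
rewrite -lecR -norm_complexE -[peval2 q _ _]subr0 -qy0.
rewrite mulrnAl -mulrnAr rmorphM rmorphMn /= -LE.
rewrite (le_trans (qL _ _ _ _ x1_le1 x2_le1 (ltW y1_lt1) (ltW y2_lt1))) //.
by rewrite ler_wpM2l // mulr2n lerD ?ltW.
Qed.

Lemma distinguished_variety_poly (V : C * C -> Prop) (q : {poly {poly C}}) :
  (exists x, V x) ->
  (forall x, V x <-> in_bidisk x /\ peval2 q x.1 x.2 = 0) ->
  (forall z w, `|z| < 1 -> `|w| = 1 -> peval2 q z w != 0) ->
  (forall z w, `|z| = 1 -> `|w| < 1 -> peval2 q z w != 0) ->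
  distinguished_variety V.
Proof.
move=> V_ne VE q_disk_circle q_circle_disk; split=> //; exists q; split=> //.
move=> [z w] clV /boundary_bidisk[/= z_le1 w_le1 z_or_w_eq1].
have qzw : peval2 q z w = 0.
  by apply: (closure2_poly_eq0 (S := V) (x := (z, w))) => // y /VE.
move: z_le1 w_le1; rewrite !le_eqVlt => /orP[/eqP z1|z_lt1] /orP[/eqP w1|w_lt1].
- by [].
- by have := q_circle_disk z w z1 w_lt1; rewrite qzw eqxx.
- by have := q_disk_circle z w z_lt1 w1; rewrite qzw eqxx.
- by case: z_or_w_eq1 => [z1|w1]; [move: z_lt1 | move: w_lt1]; rewrite ?z1 ?w1 ltxx.
Qed.

End Bidisk.

Lemma det_affine_poly (F : comRingType) k (K0 Kz Kw : 'M[F]_k) :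
  exists q : {poly {poly F}},
    forall z w, q.[w%:P].[z] = \det (K0 + w *: Kw + z *: Kz).
Proof.
pose cst (c : F) : {poly {poly F}} := c%:P%:P.
exists (\det (map_mx cst K0 + 'X *: map_mx cst Kw + 'X%:P *: map_mx cst Kz)).
move=> z w; rewrite -!horner_evalE -!det_map_mx !map_mxD !map_mxZ /=.
rewrite !horner_evalE hornerX hornerC hornerC hornerX.
have evalK (K : 'M_k) :
    map_mx (horner_eval z) (map_mx (horner_eval w%:P) (map_mx cst K)) = K.
  by apply/matrixP => i j; rewrite !mxE /= !horner_evalE !hornerC.
by rewrite !evalK.
Qed.

Section UnitaryColligation.
Variable F : numClosedFieldType.
Variables (m n : nat) (U : 'M[F]_(m + n)).
Hypothesis unitaryU : U \is unitarymx.
Local Notation A := (ulsubmx U).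
Local Notation B := (ursubmx U).
Local Notation C := (dlsubmx U).
Local Notation D := (drsubmx U).

Definition pencil (z w : F) := block_mx (A - w%:M) (z *: B) C (z *: D - 1%:M).

Lemma row_mx_mulU (x : 'rV_m) (y : 'rV_n) :
  row_mx x y *m U = row_mx (x *m A + y *m C) (x *m B + y *m D).
Proof. by rewrite -{1}(submxK U) mul_row_block. Qed.

Lemma row_mx_mulUt (x : 'rV_m) (y : 'rV_n) :
  row_mx x y *m U^t* = row_mx (x *m A^t* + y *m B^t*) (x *m C^t* + y *m D^t*).
Proof. by rewrite -{1}(submxK U) tr_block_mx map_block_mx mul_row_block. Qed.

Lemma mulUKt k (v : 'M_(k, m + n)) : v *m U *m U^t* = v.
Proof. exact: mulmxtVK. Qed.

Lemma mulUtK k (v : 'M_(k, m + n)) : v *m U^t* *m U = v.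
Proof. exact: mulmxKtV. Qed.

Lemma unitary_adjU : U^t* \is unitarymx.
Proof. by apply/unitarymxP; rewrite trmxCK -[U^t*]mul1mx mulUtK. Qed.

Lemma unitmx_1_scaleD (z : F) : `|z| < 1 -> 1%:M - z *: D \in unitmx.
Proof.
move=> z_lt1; rewrite unitmxE unitfE; apply/negP => /det0P[v v_neq0 vE].
have vDz : v = z *: (v *m D).
  by move/eqP: vE; rewrite mulmxBr mulmx1 subr_eq0 -scalemxAr => /eqP.
have := sqnorm_unitary (row_mx 0 v) unitaryU.
rewrite row_mx_mulU !mul0mx !add0r !sqnorm_row_mx sqnorm0 add0r => vU.
have /sqnorm_contraction_eq0 v0 : sqnorm v <= `|z| ^+ 2 * sqnorm v.
  rewrite {1}vDz sqnormZ ler_wpM2l ?exprn_ge0 //.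
  by rewrite -vU lerDr sqnorm_ge0.
by rewrite v0 ?eqxx in v_neq0.
Qed.

Lemma unitmx_1_scaleAt (w : F) : `|w| < 1 -> 1%:M - w *: A^t* \in unitmx.
Proof.
move=> w_lt1; rewrite unitmxE unitfE; apply/negP => /det0P[v v_neq0 vE].
have vAw : v = w *: (v *m A^t*).
  by move/eqP: vE; rewrite mulmxBr mulmx1 subr_eq0 -scalemxAr => /eqP.
have := sqnorm_unitary (row_mx v 0) unitary_adjU.
rewrite row_mx_mulUt !mul0mx !addr0 !sqnorm_row_mx sqnorm0 addr0 => vU.
have /sqnorm_contraction_eq0 v0 : sqnorm v <= `|w| ^+ 2 * sqnorm v.
  rewrite {1}vAw sqnormZ ler_wpM2l ?exprn_ge0 //.
  by rewrite -vU lerDl sqnorm_ge0.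
by rewrite v0 ?eqxx in v_neq0.
Qed.

Lemma det_transfer_sub_eq0 (z w : F) : `|z| < 1 ->
  (\det (A + z *: (B *m invmx (1%:M - z *: D) *m C) - w%:M) == 0) =
  (\det (pencil z w) == 0).
Proof.
move=> z_lt1; have unitD := unitmx_1_scaleD z_lt1; set Di := invmx _.
have zD_1 : z *: D - 1%:M = - (1%:M - z *: D) by rewrite opprB.
apply/det0P/det0P.
- case=> x x_neq0 xE; exists (row_mx x (z *: (x *m B *m Di))).
    by rewrite row_mx_eq0 negb_and x_neq0.
  rewrite mul_row_block; apply/eqP; rewrite row_mx_eq0; apply/andP; split; apply/eqP.
    rewrite -xE !mulmxBr !mulmxDr -!scalemxAl -!scalemxAr !mulmxA.
    by rewrite addrAC.
  rewrite zD_1 mulmxN -scalemxAl -!mulmxA mulVmx // mulmx1 -scalemxAr.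
  by rewrite subrr.
- case=> v v_neq0; rewrite -(hsubmxK v) mul_row_block.
  move/eqP; rewrite row_mx_eq0 => /andP[/eqP vE1 /eqP vE2].
  set x := lsubmx v in vE1 vE2 *; set y := rsubmx v in vE1 vE2 *.
  have yE : y = z *: (x *m B *m Di).
    move/eqP: vE2; rewrite zD_1 mulmxN addr_eq0 opprK => /eqP yDz.
    by rewrite -[y]mulmx1 -{1}(mulmxV unitD) mulmxA -yDz -scalemxAr -scalemxAl.
  exists x.
    apply: contraNneq v_neq0 => x0; apply/eqP.
    by rewrite -(hsubmxK v) -/x -/y yE x0 !mul0mx scaler0 row_mx0.
  rewrite -vE1 yE !mulmxBr !mulmxDr -!scalemxAl -!scalemxAr !mulmxA.
  by rewrite addrAC.
Qed.

Lemma det_adj_transfer_sub_eq0 (z w : F) : `|w| < 1 ->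
  (\det (D^t* + w *: (B^t* *m invmx (1%:M - w *: A^t*) *m C^t*) - z%:M) == 0) =
  (\det (pencil z w) == 0).
Proof.
move=> w_lt1; have unitA := unitmx_1_scaleAt w_lt1; set Ai := invmx _.
apply/det0P/det0P.
- case=> y y_neq0 yE.
  pose x := w *: (y *m B^t* *m Ai).
  pose a := x *m A^t* + y *m B^t*.
  have xE : x = w *: a.
    have : x *m (1%:M - w *: A^t*) = w *: (y *m B^t*).
      by rewrite /x -scalemxAl -!mulmxA mulVmx // mulmx1.
    rewrite mulmxBr mulmx1 -scalemxAr => /eqP; rewrite subr_eq => /eqP ->.
    by rewrite /a scalerDr addrC.
  have yEz : x *m C^t* + y *m D^t* = z *: y.
    move: yE; rewrite !mulmxBr !mulmxDr mul_mx_scalar => /eqP; rewrite subr_eq0.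
    by move/eqP <-; rewrite addrC /x -!scalemxAl -!scalemxAr !mulmxA.
  have xyUt : row_mx x y *m U^t* = row_mx a (z *: y) by rewrite row_mx_mulUt yEz.
  have := mulUtK (row_mx x y); rewrite xyUt row_mx_mulU => /eq_row_mx[xE' yE'].
  exists (row_mx a (z *: y)).
    rewrite -xyUt; apply: contraNneq y_neq0 => xyUt0.
    have : row_mx x y = 0 by rewrite -[row_mx x y]mulUtK xyUt0 mul0mx.
    by move/eqP; rewrite row_mx_eq0 => /andP[].
  rewrite mul_row_block; apply/eqP; rewrite row_mx_eq0; apply/andP; split; apply/eqP.
    by rewrite mulmxBr mul_mx_scalar addrAC -xE xE' subrr.
  rewrite mulmxBr mulmx1 -!scalemxAr -scalemxAl addrA -scalerDr.
  by rewrite [z *: (y *m D)]scalemxAl yE' subrr.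
- case=> v v_neq0; rewrite -(hsubmxK v) mul_row_block.
  move/eqP; rewrite row_mx_eq0 => /andP[/eqP vE1 /eqP vE2].
  set x := lsubmx v in vE1 vE2 *; set y := rsubmx v in vE1 vE2 *.
  pose y' := x *m B + y *m D.
  have yE : y = z *: y'.
    move/eqP: vE2; rewrite mulmxBr mulmx1 -!scalemxAr addrA -scalerDr subr_eq0.
    by move/eqP.
  have xE : x *m A + y *m C = w *: x.
    by move/eqP: vE1; rewrite mulmxBr mul_mx_scalar addrAC subr_eq0 => /eqP.
  have xyU : row_mx x y *m U = row_mx (w *: x) y' by rewrite row_mx_mulU xE.
  have := mulUKt (row_mx x y); rewrite xyU row_mx_mulUt => /esym/eq_row_mx[xE' yE'].
  have xAi : x = y' *m B^t* *m Ai.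
    have <- : x *m (1%:M - w *: A^t*) = y' *m B^t*.
      rewrite mulmxBr mulmx1 {1}xE' -scalemxAr -scalemxAl.
      by rewrite addrC addKr.
    by rewrite -mulmxA mulmxV // mulmx1.
  exists y'.
    apply: contraNneq v_neq0 => y'0; apply/eqP.
    have y0 : y = 0 by rewrite yE y'0 scaler0.
    have x0 : x = 0 by rewrite xAi y'0 !mul0mx.
    by rewrite -(hsubmxK v) -/x -/y x0 y0 row_mx0.
  rewrite !mulmxBr !mulmxDr mul_mx_scalar -scalemxAr !mulmxA -xAi -yE.
  by rewrite scalemxAl [_ + w *: x *m _]addrC -yE' subrr.
Qed.

Lemma eigen_rowD_reducing_ker (z : F) (y : 'rV_n) : z != 0 ->
  y *m C = 0 -> y = z *: (y *m D) -> reducing_ker D B C y.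
Proof.
move=> z_neq0 yC yDz.
have yD : y *m D = z^-1 *: y by rewrite {2}yDz scalerA mulVf // scale1r.
have yU : row_mx 0 y *m U = z^-1 *: row_mx 0 y.
  by rewrite row_mx_mulU !mul0mx !add0r yC yD scale_row_mx scaler0.
have := mulUKt (row_mx 0 y); rewrite yU -scalemxAl row_mx_mulUt !mul0mx !add0r.
rewrite scale_row_mx => /eq_row_mx[/eqP yBt /eqP yDt].
move: yBt; rewrite scalemx_eq0 invr_eq0 (negbTE z_neq0) /= => /eqP yBt.
have {}yDt : y *m D^t* = z *: y.
  by rewrite -[in RHS](eqP yDt) scalerA mulfV // scale1r.
apply/and4P; split.
- by rewrite yD scalemx_sub.
- by rewrite yDt scalemx_sub.
- exact/sub_kermxP.
- exact/sub_kermxP.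
Qed.

Lemma eigen_rowA_reducing_ker (w : F) (x : 'rV_m) : w != 0 ->
  x *m B = 0 -> x *m A = w *: x -> reducing_ker A C B x.
Proof.
move=> w_neq0 xB xA.
have xU : row_mx x 0 *m U = w *: row_mx x 0.
  by rewrite row_mx_mulU !mul0mx !addr0 xA xB scale_row_mx scaler0.
have := mulUKt (row_mx x 0); rewrite xU -scalemxAl row_mx_mulUt !mul0mx !addr0.
rewrite scale_row_mx => /eq_row_mx[/eqP xAt /eqP xCt].
move: xCt; rewrite scalemx_eq0 (negbTE w_neq0) /= => /eqP xCt.
have {}xAt : x *m A^t* = w^-1 *: x.
  by rewrite -[in RHS](eqP xAt) scalerA mulVf // scale1r.
apply/and4P; split.
- by rewrite xA scalemx_sub.
- by rewrite xAt scalemx_sub.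
- exact/sub_kermxP.
- exact/sub_kermxP.
Qed.

Section ReducedPencil.
Variables (SA : 'M[F]_m) (SD : 'M[F]_n).
Hypotheses (redSA : reducing_ker A C B SA) (redSD : reducing_ker D B C SD).
Hypothesis maxSA : forall r (T : 'M_(r, m)), reducing_ker A C B T -> (T <= SA)%MS.
Hypothesis maxSD : forall r (T : 'M_(r, n)), reducing_ker D B C T -> (T <= SD)%MS.
Local Notation PA := (proj_ortho SA).
Local Notation PD := (proj_ortho SD).

Definition reduced_pencil (z w : F) :=
  block_mx ((A - w%:M) *m (1%:M - PA) - PA) (z *: B)
           C ((z *: D - 1%:M) *m (1%:M - PD) - PD).

Definition pencil_corrA (w : F) := 1%:M - PA - (A - w%:M) *m PA.
Definition pencil_corrD (z : F) := 1%:M - PD - (z *: D - 1%:M) *m PD.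

Lemma projA_commute (w : F) : PA *m (A - w%:M) = (A - w%:M) *m PA.
Proof. by rewrite mulmxBr mulmxBl (proj_reducing_kerC redSA) scalar_mxC. Qed.

Lemma projD_commute (z : F) : PD *m (z *: D - 1%:M) = (z *: D - 1%:M) *m PD.
Proof.
by rewrite mulmxBr mulmxBl mulmx1 mul1mx -scalemxAr -scalemxAl (proj_reducing_kerC redSD).
Qed.

Lemma pencil_factor (z w : F) :
  pencil z w = reduced_pencil z w *m block_mx (pencil_corrA w) 0 0 (pencil_corrD z).
Proof.
rewrite /pencil /reduced_pencil mulmx_block !mulmx0 !addr0 !add0r.
rewrite (idem_commute_factor (proj_ortho_proj SA) (projA_commute w)).
rewrite (idem_commute_factor (proj_ortho_proj SD) (projD_commute z)).
have BPD := mulmx_proj_reducing_ker redSD; have CPA := mulmx_proj_reducing_ker redSA.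
congr block_mx.
  rewrite -scalemxAl; congr (_ *: _).
  rewrite !mulmxBr mulmx1 BPD subr0 mulmxA mulmxBr mulmxBl mulmx1 BPD subr0.
  rewrite -scalemxAr -scalemxAl -mulmxA -(proj_reducing_kerC redSD) mulmxA BPD.
  by rewrite mul0mx scaler0 subr0.
rewrite !mulmxBr mulmx1 CPA subr0 mulmxA mulmxBr mulmxBl.
rewrite -mulmxA -(proj_reducing_kerC redSA) mulmxA CPA mul0mx mul_mx_scalar.
by rewrite -scalemxAl CPA scaler0 !subr0.
Qed.

Lemma det_corrA_neq0 (w : F) : `|w| < 1 -> \det (pencil_corrA w) != 0.
Proof.
move=> w_lt1; apply/negP => /det0P[v v_neq0 vE].
have [vPA vAw] := idem_commute_factor_ker (proj_ortho_proj SA) (projA_commute w) vE.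
have vSA : (v <= SA)%MS by rewrite -vPA proj_ortho_sub.
have vB : v *m B = 0.
  by case/and4P: redSA => _ _ _ SAB; apply/sub_kermxP; exact: submx_trans vSA SAB.
have vA : v *m A = w *: v.
  by move/eqP: vAw; rewrite mulmxBr mul_mx_scalar subr_eq0 => /eqP.
have := sqnorm_unitary (row_mx v 0) unitaryU.
rewrite row_mx_mulU !mul0mx !addr0 vA vB !sqnorm_row_mx sqnorm0 !addr0 sqnormZ.
move=> vU; have v0 : v = 0 by apply: (sqnorm_contraction_eq0 w_lt1); rewrite vU.
by rewrite v0 eqxx in v_neq0.
Qed.

Lemma det_corrD_neq0 (z : F) : `|z| < 1 -> \det (pencil_corrD z) != 0.
Proof.
move=> z_lt1; apply/negP => /det0P[v v_neq0 vE].
have [_ vDz] := idem_commute_factor_ker (proj_ortho_proj SD) (projD_commute z) vE.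
have : v *m (1%:M - z *: D) = 0 by rewrite -opprB mulmxN vDz oppr0.
move/(congr1 (mulmx^~ (invmx (1%:M - z *: D)))).
rewrite -mulmxA mulmxV ?unitmx_1_scaleD // mulmx1 mul0mx => v0.
by rewrite v0 eqxx in v_neq0.
Qed.

Lemma det_pencil_eq0 (z w : F) : `|z| < 1 -> `|w| < 1 ->
  (\det (pencil z w) == 0) = (\det (reduced_pencil z w) == 0).
Proof.
move=> z_lt1 w_lt1; rewrite pencil_factor det_mulmx det_ublock !mulf_eq0.
by rewrite (negbTE (det_corrA_neq0 w_lt1)) (negbTE (det_corrD_neq0 z_lt1)) !orbF.
Qed.

Lemma pencil_ker (z w : F) (x : 'rV_m) (y : 'rV_n) :
  row_mx x y *m pencil z w = 0 ->
  [/\ y = z *: (x *m B + y *m D), x *m A + y *m C = w *: x &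
      sqnorm x + `|z| ^+ 2 * sqnorm (x *m B + y *m D) =
      `|w| ^+ 2 * sqnorm x + sqnorm (x *m B + y *m D)].
Proof.
rewrite /pencil mul_row_block => /eqP; rewrite row_mx_eq0 => /andP[/eqP xE /eqP yE].
have yEz : y = z *: (x *m B + y *m D).
  move/eqP: yE; rewrite mulmxBr mulmx1 -!scalemxAr addrA -scalerDr subr_eq0.
  by move/eqP.
have xEw : x *m A + y *m C = w *: x.
  by move/eqP: xE; rewrite mulmxBr mul_mx_scalar addrAC subr_eq0 => /eqP.
split=> //.
have := sqnorm_unitary (row_mx x y) unitaryU.
rewrite row_mx_mulU xEw !sqnorm_row_mx sqnormZ => ->.
by congr (_ + _); rewrite [in RHS]yEz sqnormZ.
Qed.

Lemma reduced_pencil_ker (z w : F) (v : 'rV_(m + n)) :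
  v *m reduced_pencil z w = 0 -> v *m pencil z w = 0.
Proof. by move=> vE; rewrite pencil_factor mulmxA vE mul0mx. Qed.

(* The norm balance of [pencil_ker] forces [x = 0]; then [y] spans a reducing
   subspace of [D], so it lies in [SD], where the reduced pencil acts as [-1]. *)
Lemma det_reduced_pencil_circle_disk (z w : F) :
  `|z| = 1 -> `|w| < 1 -> \det (reduced_pencil z w) != 0.
Proof.
move=> z1 w_lt1; apply/negP => /det0P[v v_neq0 vE].
have z_neq0 : z != 0 by apply: contra_eq_neq z1 => ->; rewrite normr0 eq_sym oner_eq0.
rewrite -(hsubmxK v) in v_neq0 vE.
set x := lsubmx v in v_neq0 vE; set y := rsubmx v in v_neq0 vE.
have [yDz xAC] := pencil_ker (reduced_pencil_ker vE).
rewrite z1 expr1n mul1r => /addIr normE.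
have x0 : x = 0 by apply: (sqnorm_contraction_eq0 w_lt1); rewrite -normE.
rewrite x0 !mul0mx !add0r scaler0 in yDz xAC.
have ySD : (y <= SD)%MS by apply/maxSD/(eigen_rowD_reducing_ker z_neq0).
have yzD : y *m (z *: D - 1%:M) = 0 by rewrite mulmxBr mulmx1 -scalemxAr -yDz subrr.
move: vE; rewrite x0 /reduced_pencil mul_row_block !mul0mx !add0r mulmxBr mulmxA yzD.
rewrite mul0mx sub0r proj_ortho_id // => /eqP.
rewrite row_mx_eq0 oppr_eq0 => /andP[_ /eqP y0].
by rewrite x0 y0 row_mx0 eqxx in v_neq0.
Qed.

Lemma det_reduced_pencil_disk_circle (z w : F) :
  `|z| < 1 -> `|w| = 1 -> \det (reduced_pencil z w) != 0.
Proof.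
move=> z_lt1 w1; apply/negP => /det0P[v v_neq0 vE].
have w_neq0 : w != 0 by apply: contra_eq_neq w1 => ->; rewrite normr0 eq_sym oner_eq0.
rewrite -(hsubmxK v) in v_neq0 vE.
set x := lsubmx v in v_neq0 vE; set y := rsubmx v in v_neq0 vE.
have [yDz xAC] := pencil_ker (reduced_pencil_ker vE).
rewrite w1 expr1n mul1r => /addrI normE.
have xBD0 : x *m B + y *m D = 0.
  by apply: (sqnorm_contraction_eq0 z_lt1); rewrite normE.
have y0 : y = 0 by rewrite yDz xBD0 scaler0.
rewrite y0 !mul0mx !addr0 in xAC xBD0.
have xSA : (x <= SA)%MS by apply/maxSA/(eigen_rowA_reducing_ker w_neq0).
have xAw : x *m (A - w%:M) = 0 by rewrite mulmxBr mul_mx_scalar xAC subrr.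
move: vE; rewrite y0 /reduced_pencil mul_row_block !mul0mx !addr0 mulmxBr mulmxA xAw.
rewrite mul0mx sub0r proj_ortho_id // -scalemxAr xBD0 scaler0.
move/eqP; rewrite row_mx_eq0 oppr_eq0 => /andP[/eqP x0 _].
by rewrite x0 y0 row_mx0 eqxx in v_neq0.
Qed.

Lemma det_reduced_pencil_poly : exists q : {poly {poly F}},
  forall z w, q.[w%:P].[z] = \det (reduced_pencil z w).
Proof.
have [q qE] := det_affine_poly
  (block_mx (A *m (1%:M - PA) - PA) 0 C (- (1%:M - PD) - PD))
  (block_mx 0 B 0 (D *m (1%:M - PD)))
  (block_mx (- (1%:M - PA)) 0 0 (0 : 'M_n)).
exists q => z w; rewrite qE !scale_block_mx !add_block_mx !scaler0 !addr0 !add0r.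
rewrite /reduced_pencil; congr (\det (block_mx _ _ _ _)); apply: esym.
  by rewrite mulmxBl mul_scalar_mx scalerN addrAC.
by rewrite mulmxBl mul1mx -scalemxAl [RHS]addrC addrA.
Qed.
End ReducedPencil.

End UnitaryColligation.

Theorem mainTheorem4 (R : realType) (m n : nat) (hm : (0 < m)%N) (hn : (0 < n)%N)
  (U : 'M[R[i]]_(m + n)) (hU : U \is unitarymx) (hU' : U^t* \is unitarymx) :
  let A := ulsubmx U in let B := ursubmx U in
  let C := dlsubmx U in let D := drsubmx U in
  let Psi := fun z : R[i] => A + z *: (B *m invmx (1%:M - z *: D) *m C) in
  let Psi' := fun w : R[i] =>
      D^t* + w *: (B^t* *m invmx (1%:M - w *: A^t*) *m C^t*) in
  let V := fun x : R[i] * R[i] =>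
      in_bidisk x /\
      \det (block_mx (A - x.2%:M) (x.1 *: B) C (x.1 *: D - 1%:M)) = 0 in
  (forall z w : R[i], in_bidisk (z, w) ->
     ((\det (Psi z - w%:M) = 0 <-> \det (Psi' w - z%:M) = 0) /\
      (\det (Psi' w - z%:M) = 0 <-> V (z, w)))) /\
  ((exists x, V x) -> distinguished_variety V).
Proof.
move=> A B C D Psi Psi' V.
have [SA redSA maxSA] := max_reducing_ker A C B.
have [SD redSD maxSD] := max_reducing_ker D B C.
have [q qE] := det_reduced_pencil_poly U SA SD.
split=> [z w [z_lt1 w_lt1]|V_ne].
  rewrite /V /Psi /Psi' !(rwP eqP) det_transfer_sub_eq0 // det_adj_transfer_sub_eq0 //.
  by split; [|split=> [|[]]].
apply: (distinguished_variety_poly (q := q)) => // [[z w]|z w|z w]; rewrite /peval2 qE.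
- rewrite /V !(rwP eqP) /=; split=> -[[z_lt1 w_lt1]].
    by rewrite (det_pencil_eq0 hU redSA redSD z_lt1 w_lt1).
  by rewrite (det_pencil_eq0 hU redSA redSD z_lt1 w_lt1).
- exact: det_reduced_pencil_disk_circle.
- exact: det_reduced_pencil_circle_disk.
Qed.
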